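(* Let $W,V$ be subspaces of $\mathbb{C}^n$ with $\mathbb{C}^n=W\oplus V^\perp$, let $\{\mathbf{w}_i\}_{i=1}^N$ be a frame for $W$ and let $\{\mathbf{v}_i\}_{i=1}^N$ be an oblique dual frame of $\{\mathbf{w}_i\}_{i=1}^N$ on $V$. Then $$\sum_{i=1}^N|\langle\mathbf{w}_i,\mathbf{v}_i\rangle|^2\ge\frac{d_W^2}{N},$$ where $d_W=\dim W$. Furthermore, equality holds if and only if $\langle\mathbf{w}_i,\mathbf{v}_i\rangle=\frac{d_W}{N}$ for each $i$.
   Context: The inner product on $\mathbb{C}^n$ is $\langle\mathbf{x},\mathbf{y}\rangle=\mathbf{y}^*\mathbf{x}$ (linear in the first argument). $V^\perp$ is the orthogonal complement of $V$. When $\mathbb{C}^n=W\oplus V^\perp$, $\boldsymbol{\pi}_{WV^\perp}$ denotes the oblique projection onto $W$ along $V^\perp$ (identity on $W$, zero on $V^\perp$). A finite family $\{\mathbf{w}_i\}_{i=1}^N\subset W$ is a frame for $W$ if there are $0<A\le B$ with $A\|\mathbf{f}\|^2\le\sum_i|\langle\mathbf{w}_i,\mathbf{f}\rangle|^2\le B\|\mathbf{f}\|^2$ for all $\mathbf{f}\in W$ (equivalently, it spans $W$). A frame $\{\mathbf{v}_i\}_{i=1}^N$ for $V$ (with $\mathbf{v}_i\in V$) is an oblique dual frame of $\{\mathbf{w}_i\}_{i=1}^N$ on $V$ if $\boldsymbol{\pi}_{WV^\perp}\mathbf{f}=\sum_{i=1}^N\langle\mathbf{f},\mathbf{v}_i\rangle\mathbf{w}_i$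 for all $\mathbf{f}\in\mathbb{C}^n$. *)

(* C^n is modelled as row vectors 'rV[R[i]]_n with R : realType
   (R[i] = complex R from mathcomp-real-closed), subspaces as row spaces of
   square matrices (mxalgebra). *)
From mathcomp Require Import all_boot all_algebra.
From mathcomp Require Import reals complex.
Set Implicit Arguments. Unset Strict Implicit. Unset Printing Implicit Defensive.
Import GRing.Theory Num.Theory.
Local Open Scope ring_scope.

Definition ip (R : realType) (n : nat) (x y : 'rV[R[i]]_n) : R[i] :=
  \sum_(k < n) x 0 k * (y 0 k)^*.

Definition in_perp (R : realType) (n : nat) (V : 'M[R[i]]_n) (x : 'rV[R[i]]_n) : Prop :=
  forall v : 'rV[R[i]]_n, (v <= V)%MS -> ip x v = 0.

Definition direct_sum_perp (R : realType) (n : nat) (W V : 'M[R[i]]_n) : Prop :=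
  (forall f : 'rV[R[i]]_n, exists g h : 'rV[R[i]]_n,
      [/\ (g <= W)%MS, in_perp V h & f = g + h]) /\
  (forall g : 'rV[R[i]]_n, (g <= W)%MS -> in_perp V g -> g = 0).

(* p = pi_{W V^perp} f : the unique g in W with f - g in V^perp
   (unique when C^n = W (+) V^perp) *)
Definition is_oblique_proj (R : realType) (n : nat) (W V : 'M[R[i]]_n)
    (f g : 'rV[R[i]]_n) : Prop :=
  (g <= W)%MS /\ in_perp V (f - g).

Definition is_frame (R : realType) (n N : nat) (W : 'M[R[i]]_n)
    (w : 'I_N -> 'rV[R[i]]_n) : Prop :=
  (forall i, (w i <= W)%MS) /\
  exists A B : R[i], [/\ 0 < A, A <= B &
    forall f : 'rV[R[i]]_n, (f <= W)%MS ->
      A * ip f f <= \sum_(i < N) `|ip (w i) f| ^+ 2 <= B * ip f f].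

Definition oblique_dual_frame (R : realType) (n N : nat) (W V : 'M[R[i]]_n)
    (w v : 'I_N -> 'rV[R[i]]_n) : Prop :=
  is_frame V v /\
  forall f : 'rV[R[i]]_n,
    is_oblique_proj W V f (\sum_(i < N) ip f (v i) *: w i).

(* The matrix P := \sum_i v_i^* w_i acts on row vectors by f |-> \sum_i <f, v_i> w_i,
   so by the dual frame property it represents the oblique projection onto W along
   V^perp. Being an idempotent with range W, its trace is dim W; its trace is also
   \sum_i <w_i, v_i>. The numbers a_i := <w_i, v_i> thus sum to d_W, and the variance
   identity \sum_i |a_i - d_W/N|^2 = \sum_i |a_i|^2 - d_W^2/N gives both the bound
   and its equality case. *)
From mathcomp Require Import all_boot all_algebra.
From mathcomp Require Import reals complex.
From mathcomp Require Import ring.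
Set Implicit Arguments. Unset Strict Implicit. Unset Printing Implicit Defensive.
Import GRing.Theory Num.Theory.
Local Open Scope ring_scope.

Lemma mxtrace_idem (F : fieldType) n (A : 'M[F]_n) :
  A *m A = A -> \tr A = (\rank A)%:R.
Proof.
move=> AA; have defA := mulmx_base A.
have fullC := col_base_full A; have freeB := row_base_free A.
move: defA fullC freeB; set C := col_base A; set B := row_base A.
clearbody C B => defA fullC freeB.
have BCB : B *m C *m B = B.
  by apply: (row_full_inj fullC); rewrite !mulmxA defA -mulmxA defA AA.
have BC1 : B *m C = 1%:M by apply: (row_free_inj freeB); rewrite BCB mul1mx.
by rewrite -{1}defA mxtrace_mulC BC1 mxtrace1.
Qed.

Section MeanSquares.
Variables (C : numClosedFieldType) (N : nat) (a : 'I_N -> C).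

Lemma sum_sqr_norm_sub_mean : (0 < N)%N ->
  \sum_i `|a i - (\sum_j a j) / N%:R| ^+ 2 =
  \sum_i `|a i| ^+ 2 - `|\sum_j a j| ^+ 2 / N%:R.
Proof.
move=> N_gt0; set s := \sum_j a j.
have N_neq0 : (N%:R : C) != 0 by rewrite pnatr_eq0 -lt0n.
have conjB x : (x - s / N%:R)^* = x^* - s^* / N%:R.
  by rewrite rmorphB rmorphM fmorphV rmorph_nat.
under eq_bigr do rewrite normCK conjB mulrBl !mulrBr.
under [X in _ = X - _]eq_bigr do rewrite normCK.
rewrite !sumrB -mulr_suml -mulr_sumr -rmorph_sum sumr_const card_ord normCK -/s.
by rewrite -mulr_natr; field.
Qed.

Lemma sum_sqr_norm_ge_mean :
  `|\sum_i a i| ^+ 2 / N%:R <= \sum_i `|a i| ^+ 2 /\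
  (\sum_i `|a i| ^+ 2 = `|\sum_i a i| ^+ 2 / N%:R <->
   forall i, a i = (\sum_j a j) / N%:R).
Proof.
case: (posnP N) => [N0 | N_gt0].
  move: a; rewrite N0 => a0.
  by rewrite !big_ord0 invr0 mulr0; split=> //; split=> // _ [].
have := sum_sqr_norm_sub_mean N_gt0; set m := _ / N%:R => variance.
have sqr_ge0 i : 0 <= `|a i - m| ^+ 2 by rewrite exprn_ge0.
split; first by rewrite -subr_ge0 -variance sumr_ge0.
split=> [/eqP | a_mean].
  rewrite -subr_eq0 -variance => /eqP /psumr_eq0P sum0 i.
  by apply/eqP; rewrite -subr_eq0 -normr_eq0 -sqrf_eq0 sum0.
by apply/eqP; rewrite -subr_eq0 -variance big1 // => i _; rewrite a_mean subrr normr0 expr0n.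
Qed.

End MeanSquares.

Section OuterProduct.
Variables (R : realType) (n : nat).

Definition outer_mx (w v : 'rV[R[i]]_n) : 'M[R[i]]_n := (map_mx Num.conj v)^T *m w.

Lemma mul_outer_mx f w v : f *m outer_mx w v = ip f v *: w.
Proof.
rewrite /outer_mx mulmxA [f *m _]mx11_scalar mul_scalar_mx mxE.
by congr (_ *: _); apply: eq_bigr => k _; rewrite !mxE.
Qed.

Lemma mxtrace_outer_mx w v : \tr (outer_mx w v) = ip w v.
Proof.
rewrite /outer_mx mxtrace_mulC trace_mx11 mxE.
by apply: eq_bigr => k _; rewrite !mxE.
Qed.

End OuterProduct.

Section DualFrameMatrix.
Variables (R : realType) (n N : nat) (W V : 'M[R[i]]_n).
Variables (w v : 'I_N -> 'rV[R[i]]_n).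
Hypothesis W_cap_perp : forall g, (g <= W)%MS -> in_perp V g -> g = 0.
Hypothesis dual_proj :
  forall f, is_oblique_proj W V f (\sum_i ip f (v i) *: w i).

Definition dual_frame_mx : 'M[R[i]]_n := \sum_i outer_mx (w i) (v i).

Lemma mul_dual_frame_mx f : f *m dual_frame_mx = \sum_i ip f (v i) *: w i.
Proof. by rewrite mulmx_sumr; apply: eq_bigr => i _; rewrite mul_outer_mx. Qed.

Lemma dual_frame_mx_sub (f : 'rV[R[i]]_n) : (f *m dual_frame_mx <= W)%MS.
Proof. by case: (dual_proj f); rewrite mul_dual_frame_mx. Qed.

Lemma dual_frame_mx_id (g : 'rV[R[i]]_n) : (g <= W)%MS -> g *m dual_frame_mx = g.
Proof.
move=> gW; apply/eqP; rewrite eq_sym -subr_eq0; apply/eqP; apply: W_cap_perp.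
  by rewrite addmx_sub // eqmx_opp dual_frame_mx_sub.
by case: (dual_proj g); rewrite mul_dual_frame_mx.
Qed.

Lemma dual_frame_mx_idem : dual_frame_mx *m dual_frame_mx = dual_frame_mx.
Proof.
apply/row_matrixP => i.
by rewrite row_mul dual_frame_mx_id // rowE dual_frame_mx_sub.
Qed.

Lemma mxrank_dual_frame_mx : \rank dual_frame_mx = \rank W.
Proof.
apply/eqmx_rank/andP; split; apply/row_subP => i.
  by rewrite rowE dual_frame_mx_sub.
by rewrite -(dual_frame_mx_id (row_sub i W)) submxMl.
Qed.

Lemma sum_ip_dual_frame : \sum_i ip (w i) (v i) = (\rank W)%:R.
Proof.
rewrite -mxrank_dual_frame_mx -mxtrace_idem ?dual_frame_mx_idem //.
by rewrite raddf_sum; apply: eq_bigr => i _; rewrite /= mxtrace_outer_mx.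
Qed.

End DualFrameMatrix.

Theorem lemma3p2 (R : realType) (n N : nat) (W V : 'M[R[i]]_n)
    (w v : 'I_N -> 'rV[R[i]]_n) :
  direct_sum_perp W V ->
  is_frame W w ->
  oblique_dual_frame W V w v ->
  ((\rank W) ^ 2)%:R / N%:R <= \sum_(i < N) `|ip (w i) (v i)| ^+ 2 /\
  (\sum_(i < N) `|ip (w i) (v i)| ^+ 2 = ((\rank W) ^ 2)%:R / N%:R <->
   forall i : 'I_N, ip (w i) (v i) = (\rank W)%:R / N%:R).
Proof.
move=> [_ W_cap_perp] _ [_ dual_proj].
have := sum_sqr_norm_ge_mean (fun i => ip (w i) (v i)).
by rewrite (sum_ip_dual_frame W_cap_perp dual_proj) normr_nat natrX.
Qed.
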